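(* Let $A\in\mathbb{C}\setminus\{0\}$, let $\sqrt{A}$ denote either square root of $A$, and let $|q|<1$. Define $G(A;q):=\sum_{n\geq0}\frac{q^{n^2+2n}(A;q^2)_n}{(q^2;q^2)_n}$. Then $$G(A;q)=\frac1{2\sqrt{A}} (-q;q^2)_{\infty}\left[(-\sqrt{A};-q)_{\infty}- (\sqrt{A};-q)_{\infty}\right].$$
   Context: The $q$-Pochhammer symbol: $(a;q)_0=1$, $(a;q)_n=\prod_{j=0}^{n-1}(1-aq^j)$ for $n\ge1$, and $(a;q)_\infty=\prod_{j\ge0}(1-aq^j)$. *)

From Stdlib Require Import Reals.
From Coquelicot Require Import Coquelicot.
Open Scope C_scope.

Fixpoint qpoch (a q : Complex.C) (n : nat) : Complex.C :=
  match n with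
  | O => 1
  | S m => qpoch a q m * (1 - a * pow_n q m)
  end.

Definition qpoch_inf_is (a q L : Complex.C) : Prop :=
  filterlim (fun n => qpoch a q n) eventually (locally L).

Definition G_term (A q : Complex.C) (n : nat) : Complex.C :=
  pow_n q (n * n + 2 * n) * qpoch A (q * q) n / qpoch (q * q) (q * q) n.

(** Euler's expansion (x;p)_oo = sum_n c_n(p) x^n, with c_n(p) = (-1)^n p^(n(n-1)/2) / (p;p)_n,
    together with the finite q-binomial theorem for (A;q^2)_n, writes the n-th term of G as the
    n-th antidiagonal of the double series sum_k sum_m a_k c_m(q^2) (-q^(2k+3))^m, where
    a_k = (-A)^k q^(2k^2+k) / (q^2;q^2)_k.  Summing the rows first, which Tannery's theorem
    justifies, gives sum_k a_k (-q^(2k+3);q^2)_oo = (-q;q^2)_oo sum_k a_k / (-q;q^2)_(k+1).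
    Since (q^2;q^2)_k (-q;q^2)_(k+1) = (-q;-q)_(2k+1), the k-th summand is the (2k+1)-st term of
    Euler's expansion of ((-s;-q)_oo - (s;-q)_oo) / (2s) with s^2 = A, whose even terms vanish. *)

From Stdlib Require Import Reals Lra Lia ClassicalEpsilon.
From Coquelicot Require Import Coquelicot.
Open Scope C_scope.

Lemma pow_n_Cpow (x : C) n : pow_n x n = x ^ n.
Proof. induction n as [|n IH]; simpl; rewrite ?IH; reflexivity. Qed.

Lemma Cpow_opp (x : C) n : (- x) ^ n = (-1) ^ n * x ^ n.
Proof. rewrite <- Cpow_mult_l. f_equal. ring. Qed.

Lemma Cpow_m1_double k : (-1) ^ (2 * k) = 1.
Proof. rewrite Cpow_mult_r. replace ((-1) ^ 2) with (RtoC 1) by (simpl; ring). apply Cpow_1_l. Qed.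

Lemma Cpow_m1_double_S k : (-1) ^ (2 * k + 1) = -1.
Proof. rewrite Cpow_add_r, Cpow_m1_double. simpl. ring. Qed.

Lemma Cpow_m1_mul_self k : (-1) ^ k * (-1) ^ k = 1.
Proof.
  rewrite <- Cpow_add_r. replace (k + k)%nat with (2 * k)%nat by lia. apply Cpow_m1_double.
Qed.

Lemma Cpow_sqr (q : C) j : (q * q) ^ j = q ^ (2 * j).
Proof. rewrite Cpow_mult_l, <- Cpow_add_r. f_equal. lia. Qed.

Lemma Cmod_sqr_lt_1 q : (Cmod q < 1)%R -> (Cmod (q * q) < 1)%R.
Proof. intros H. rewrite Cmod_mult. pose proof (Cmod_ge_0 q). nra. Qed.

Lemma Cmod_pow_le_1 (p : C) n : (Cmod p <= 1)%R -> (Cmod (p ^ n) <= 1)%R.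
Proof.
  intros H. rewrite Cmod_pow, <- (pow1 n). apply pow_incr. split; [apply Cmod_ge_0 | exact H].
Qed.

Lemma Cmod_1_minus_ge z : (1 - Cmod z <= Cmod (1 - z))%R.
Proof.
  pose proof (Cmod_triangle (1 - z) z) as H. replace (1 - z + z) with (RtoC 1) in H by ring.
  rewrite Cmod_1 in H. lra.
Qed.

Lemma Cmod_1_minus_pow_S_ge (p : C) n : (Cmod p <= 1)%R ->
  (1 - Cmod p <= Cmod (1 - p ^ S n))%R.
Proof.
  intros H. pose proof (Cmod_1_minus_ge (p ^ S n)). pose proof (Cmod_pow_le_1 p n H).
  rewrite Cpow_S, Cmod_mult in *. pose proof (Cmod_ge_0 p). pose proof (Cmod_ge_0 (p ^ n)). nra.
Qed.

Lemma Cminus_1_pow_S_neq_0 (p : C) n : (Cmod p < 1)%R -> 1 - p ^ S n <> 0.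
Proof.
  intros H E. pose proof (Cmod_1_minus_pow_S_ge p n ltac:(lra)). rewrite E, Cmod_0 in H0. lra.
Qed.

Lemma filterlim_C_eps (u : nat -> C) l : filterlim u eventually (locally l) <->
  forall eps, (0 < eps)%R -> exists N, forall n, (N <= n)%nat -> (Cmod (u n - l) < eps)%R.
Proof.
  rewrite filterlim_locally_ball_norm. split.
  - intros H eps Heps. exact (H (mkposreal eps Heps)).
  - intros H eps. exact (H eps (cond_pos eps)).
Qed.

Lemma is_series_C_unique (a : nat -> C) l1 l2 : is_series a l1 -> is_series a l2 -> l1 = l2.
Proof. apply filterlim_locally_unique. Qed.

Lemma is_series_C_ext (a b : nat -> C) l l' : (forall n, a n = b n) -> l = l' ->
  is_series a l -> is_series b l'.
Proof. intros H <-. apply is_series_ext, H. Qed.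

Lemma lim_Cmod_le (u : nat -> C) l B : filterlim u eventually (locally l) ->
  (forall n, Cmod (u n) <= B)%R -> (Cmod l <= B)%R.
Proof.
  intros Hu HB.
  apply (is_lim_seq_le (fun n => Cmod (u n)) (fun _ => B) (Cmod l) B HB).
  - exact (filterlim_comp _ _ _ u norm _ _ _ Hu (filterlim_norm l)).
  - apply is_lim_seq_const.
Qed.

Lemma sum_n_le_is_series (b : nat -> R) B N : (forall k, 0 <= b k)%R -> is_series b B ->
  (sum_n b N <= B)%R.
Proof.
  intros H0 HB. apply (is_lim_seq_incr_compare (sum_n b)); [exact HB |].
  intros n. rewrite sum_Sn. specialize (H0 (S n)). change plus with Rplus. lra.
Qed.

Lemma Cmod_sum_n_le (a : nat -> C) N : (Cmod (sum_n a N) <= sum_n (fun k => Cmod (a k)) N)%R.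
Proof. apply (norm_sum_n_m a 0 N). Qed.

Lemma is_series_Cmod_le (a : nat -> C) (b : nat -> R) l B :
  (forall n, Cmod (a n) <= b n)%R -> is_series a l -> is_series b B -> (Cmod l <= B)%R.
Proof.
  intros H Ha Hb. apply (lim_Cmod_le _ _ _ Ha). intros N.
  eapply Rle_trans; [apply Cmod_sum_n_le |].
  eapply Rle_trans; [apply sum_n_m_le, H |].
  apply sum_n_le_is_series; [| exact Hb].
  intros k. eapply Rle_trans; [apply Cmod_ge_0 | apply H].
Qed.

(* The generic lemmas on [sum_n] live over [AbelianMonoid.sort C_AbelianMonoid], which [rewrite]
   and [ring] do not identify with [C]; these restatements over [C] avoid that. *)
Lemma sum_n_Sl (f : nat -> C) n : sum_n f (S n) = f O + sum_n (fun k => f (S k)) n.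
Proof. unfold sum_n. rewrite sum_Sn_m by lia. rewrite sum_n_m_S. reflexivity. Qed.

Lemma sum_n_Cplus (u v : nat -> C) n : sum_n (fun k => u k + v k) n = sum_n u n + sum_n v n.
Proof. exact (sum_n_plus u v n). Qed.

Lemma sum_n_Cmult_l (c : C) (u : nat -> C) n : sum_n (fun k => c * u k) n = c * sum_n u n.
Proof. exact (sum_n_scal_l c u n). Qed.

Lemma sum_n_C_Sn (a : nat -> C) n : sum_n a (S n) = sum_n a n + a (S n) :> C.
Proof. exact (sum_Sn a n). Qed.

Lemma sum_n_C_ext_loc (a b : nat -> C) N : (forall n, (n <= N)%nat -> a n = b n) ->
  sum_n a N = sum_n b N.
Proof. apply sum_n_ext_loc. Qed.

Lemma ex_series_ratio_pow (b : nat -> R) (K r : R) : (0 <= r < 1)%R -> (forall n, 0 <= b n)%R ->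
  (forall n, b (S n) <= b n * (K * r ^ n))%R -> ex_series b.
Proof.
  intros [Hr0 Hr1] Hb0 Hb.
  assert (Hy : (0 < / (2 * (Rabs K + 1)))%R).
  { apply Rinv_0_lt_compat. pose proof (Rabs_pos K). lra. }
  destruct (pow_lt_1_zero r ltac:(rewrite Rabs_right; lra) _ Hy) as [N0 HN0].
  assert (Hhalf : forall n, (n >= N0)%nat -> (b (S n) <= b n / 2)%R).
  { intros n Hn. eapply Rle_trans; [apply Hb |].
    unfold Rdiv. apply Rmult_le_compat_l; [apply Hb0 |].
    specialize (HN0 n Hn). rewrite Rabs_right in HN0 by (apply Rle_ge, pow_le; lra).
    pose proof (Rabs_pos K). pose proof (Rle_abs K). pose proof (pow_le r n Hr0).
    assert (Rabs K * r ^ n <= Rabs K * / (2 * (Rabs K + 1)))%R by (apply Rmult_le_compat_l; lra).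
    assert (Rabs K * / (2 * (Rabs K + 1)) <= / 2)%R.
    { apply (Rmult_le_reg_r (2 * (Rabs K + 1))); [lra |].
      rewrite Rmult_assoc, Rinv_l by lra. field_simplify; lra. }
    nra. }
  assert (Hgeom : forall k, (b (N0 + k)%nat <= b N0 * (/ 2) ^ k)%R).
  { induction k as [|k IH]; [rewrite Nat.add_0_r; simpl; lra |].
    replace (N0 + S k)%nat with (S (N0 + k)) by lia.
    eapply Rle_trans; [apply Hhalf; lia |]. simpl. lra. }
  apply (ex_series_incr_n b N0).
  apply (ex_series_le (V := R_CompleteNormedModule)) with (b := fun k => (b N0 * (/ 2) ^ k)%R).
  - intros n. change (norm (b (N0 + n)%nat)) with (Rabs (b (N0 + n)%nat)).
    rewrite Rabs_right by (apply Rle_ge, Hb0). apply Hgeom.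
  - exists (b N0 * / (1 - / 2))%R.
    exact (is_series_scal_l (V := R_NormedModule) (b N0) _ _
      (is_series_geom (/ 2) ltac:(rewrite Rabs_right; lra))).
Qed.

Lemma sum_n_odd (h : nat -> C) K : (forall k, h (2 * k)%nat = 0) ->
  sum_n (fun k => h (2 * k + 1)%nat) K = sum_n h (2 * K + 1).
Proof.
  intros Heven. induction K as [|K IH].
  - change (2 * 0 + 1)%nat with 1%nat. rewrite sum_O, sum_Sn, sum_O, (Heven O : h O = 0).
    change (h 1%nat = 0 + h 1%nat). ring.
  - rewrite sum_Sn, IH. replace (2 * S K + 1)%nat with (S (S (2 * K + 1))) by lia.
    rewrite (sum_Sn h (S _)), (sum_Sn h (2 * K + 1)).
    replace (S (2 * K + 1)) with (2 * S K)%nat by lia. rewrite Heven.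
    change (sum_n h (2 * K + 1) + h (S (2 * S K))
      = sum_n h (2 * K + 1) + 0 + h (S (2 * S K))). ring.
Qed.

Lemma is_series_odd (h : nat -> C) l : is_series h l -> (forall k, h (2 * k)%nat = 0) ->
  is_series (fun k => h (2 * k + 1)%nat) l.
Proof.
  intros Hs Heven. unfold is_series.
  apply (filterlim_ext (fun K => sum_n h (2 * K + 1))).
  { intros K. symmetry. apply sum_n_odd, Heven. }
  apply (filterlim_comp _ _ _ (fun K => 2 * K + 1)%nat (sum_n h) _ eventually); [| exact Hs].
  intros P [N HN]. exists N. intros n Hn. apply HN. lia.
Qed.

Lemma filterlim_sum_n_fixed (f : nat -> nat -> C) (g : nat -> C) K :
  (forall k, filterlim (fun N => f N k) eventually (locally (g k))) ->
  filterlim (fun N => sum_n (f N) K) eventually (locally (sum_n g K)).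
Proof.
  intros H. induction K as [|K IH].
  - apply (filterlim_ext (fun N => f N O)); [intros; rewrite sum_O; reflexivity |].
    rewrite sum_O. apply H.
  - apply (filterlim_ext (fun N => plus (sum_n (f N) K) (f N (S K)))).
    { intros N. rewrite sum_Sn. reflexivity. }
    rewrite sum_Sn. exact (filterlim_comp_2 _ _ _ IH (H (S K)) (filterlim_plus _ _)).
Qed.

Lemma Cmod_sum_n_tail_le (a : nat -> C) (M : nat -> R) K N : (K <= N)%nat ->
  (forall k, Cmod (a k) <= M k)%R ->
  (Cmod (sum_n a N - sum_n a K) <= sum_n_m M (S K) N)%R.
Proof.
  intros HKN H.
  replace (sum_n a N - sum_n a K) with (sum_n_m a (S K) N)
    by exact (sum_n_m_sum_n (G := C_AbelianGroup) a K N HKN).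
  eapply Rle_trans; [apply (norm_sum_n_m a) | apply sum_n_m_le, H].
Qed.

Lemma tannery (f : nat -> nat -> C) (g : nat -> C) (M : nat -> R) (L : C) :
  (forall k, filterlim (fun N => f N k) eventually (locally (g k))) ->
  (forall N k, (Cmod (f N k) <= M k)%R) -> ex_series M -> is_series g L ->
  filterlim (fun N => sum_n (f N) N) eventually (locally L).
Proof.
  intros Hlim HM HMs Hg.
  assert (HgM : forall k, (Cmod (g k) <= M k)%R).
  { intros k. apply (lim_Cmod_le _ _ _ (Hlim k)). intros; apply HM. }
  apply filterlim_C_eps. intros eps He.
  destruct (Cauchy_ex_series _ HMs (mkposreal (eps / 6) ltac:(lra))) as [K HK].
  assert (Htail : forall N, (K <= N)%nat -> (sum_n_m M (S K) N < eps / 6)%R).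
  { intros N HN. destruct (Nat.eq_dec K N) as [<- | Hne].
    - rewrite sum_n_m_zero by lia. change (zero : R) with 0%R. lra.
    - specialize (HK (S K) N ltac:(lia) ltac:(lia)).
      eapply Rle_lt_trans; [apply Rle_abs | exact HK]. }
  destruct (proj1 (filterlim_C_eps _ _) Hg (eps / 3)%R ltac:(lra)) as [N1 H1].
  destruct (proj1 (filterlim_C_eps _ _) (filterlim_sum_n_fixed f g K Hlim) (eps / 3)%R
    ltac:(lra)) as [N2 H2].
  exists (max K (max N1 N2)). intros N HN.
  specialize (H1 N ltac:(lia)). specialize (H2 N ltac:(lia)).
  change (Cmod (sum_n g N - L) < eps / 3)%R in H1.
  pose proof (Cmod_sum_n_tail_le (f N) M K N ltac:(lia) (HM N)) as T1.
  pose proof (Cmod_sum_n_tail_le g M K N ltac:(lia) HgM) as T2.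
  specialize (Htail N ltac:(lia)).
  set (X := sum_n (f N) K - sum_n g K) in *.
  set (Y := sum_n (f N) N - sum_n (f N) K) in *.
  set (Z := sum_n g N - sum_n g K) in *.
  set (W := sum_n g N - L) in *.
  replace (sum_n (f N) N - L) with (X + Y + - Z + W) by (unfold X, Y, Z, W; ring).
  pose proof (Cmod_triangle (X + Y + - Z) W).
  pose proof (Cmod_triangle (X + Y) (- Z)). rewrite Cmod_opp in *.
  pose proof (Cmod_triangle X Y).
  lra.
Qed.

Lemma qpoch_S a p n : qpoch a p (S n) = qpoch a p n * (1 - a * p ^ n).
Proof. simpl. rewrite pow_n_Cpow. reflexivity. Qed.

Fixpoint euler_coef (p : C) (n : nat) : C :=
  match n with
  | O => 1
  | S m => euler_coef p m * (- p ^ m) / (1 - p ^ S m)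
  end.

Lemma euler_coef_S p n : euler_coef p (S n) = euler_coef p n * (- p ^ n) / (1 - p ^ S n).
Proof. reflexivity. Qed.

Definition euler_term (p x : C) (n : nat) : C := euler_coef p n * x ^ n.

Lemma Cmod_euler_coef_S_le p n : (Cmod p < 1)%R ->
  (Cmod (euler_coef p (S n)) <= Cmod (euler_coef p n) * (/ (1 - Cmod p) * Cmod p ^ n))%R.
Proof.
  intros Hp. rewrite euler_coef_S. unfold Cdiv.
  rewrite !Cmod_mult, Cmod_opp, Cmod_pow, Cmod_inv by (apply Cminus_1_pow_S_neq_0, Hp).
  pose proof (Cmod_1_minus_pow_S_ge p n ltac:(lra)).
  assert (/ Cmod (1 - p ^ S n) <= / (1 - Cmod p))%R by (apply Rinv_le_contravar; lra).
  pose proof (Cmod_ge_0 (euler_coef p n)). pose proof (pow_le (Cmod p) n (Cmod_ge_0 p)).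
  rewrite Rmult_assoc. apply Rmult_le_compat_l; [assumption |].
  rewrite Rmult_comm. apply Rmult_le_compat_r; assumption.
Qed.

Lemma ex_series_Cmod_euler_coef p r : (Cmod p < 1)%R -> (0 <= r)%R ->
  ex_series (fun n => Cmod (euler_coef p n) * r ^ n)%R.
Proof.
  intros Hp Hr. apply ex_series_ratio_pow with (K := (/ (1 - Cmod p) * r)%R) (r := Cmod p).
  - split; [apply Cmod_ge_0 | exact Hp].
  - intros n. apply Rmult_le_pos; [apply Cmod_ge_0 | apply pow_le, Hr].
  - intros n. simpl pow. pose proof (Cmod_euler_coef_S_le p n Hp).
    pose proof (pow_le r n Hr). pose proof (pow_le (Cmod p) n (Cmod_ge_0 p)).
    assert (0 < / (1 - Cmod p))%R by (apply Rinv_0_lt_compat; lra).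
    replace (Cmod (euler_coef p n) * r ^ n * (/ (1 - Cmod p) * r * Cmod p ^ n))%R
      with (Cmod (euler_coef p n) * (/ (1 - Cmod p) * Cmod p ^ n) * (r * r ^ n))%R by ring.
    apply Rmult_le_compat_r; [nra | assumption].
Qed.

Lemma ex_series_euler_term p x : (Cmod p < 1)%R -> ex_series (euler_term p x).
Proof.
  intros Hp. apply (ex_series_le (V := C_CompleteNormedModule) _
    (fun n => Cmod (euler_coef p n) * Cmod x ^ n)%R).
  - intros n. unfold euler_term. change norm with Cmod. rewrite Cmod_mult, Cmod_pow. lra.
  - apply ex_series_Cmod_euler_coef; [exact Hp | apply Cmod_ge_0].
Qed.

(* A junk value when the series diverges. *)
Definition euler_sum (p x : C) : C :=
  epsilon (inhabits (RtoC 0)) (fun l => is_series (euler_term p x) l).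

Lemma is_series_euler_sum p x : (Cmod p < 1)%R -> is_series (euler_term p x) (euler_sum p x).
Proof. intros Hp. unfold euler_sum. apply epsilon_spec, ex_series_euler_term, Hp. Qed.

(* The coefficient of x^(n+1) in E(x) - E(xp) is c_(n+1) (1 - p^(n+1)) = - p^n c_n,
   which is the coefficient of x^(n+1) in - x E(xp). *)
Lemma euler_sum_shift p x : (Cmod p < 1)%R -> euler_sum p x = (1 - x) * euler_sum p (x * p).
Proof.
  intros Hp.
  pose proof (is_series_euler_sum p (x * p) Hp) as S1.
  set (shifted := fun n => match n with O => RtoC 0 | S m => x * euler_term p (x * p) m end).
  assert (S2 : is_series shifted (x * euler_sum p (x * p))).
  { apply is_series_decr_1.
    refine (is_series_C_ext _ _ _ _ (fun n => eq_refl) _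
      (is_series_scal_l (V := C_NormedModule) x _ _ S1)).
    change (x * euler_sum p (x * p) = x * euler_sum p (x * p) + - 0). ring. }
  apply (is_series_C_unique (euler_term p x)); [apply is_series_euler_sum, Hp |].
  refine (is_series_C_ext _ _ _ _ _ _ (is_series_minus _ _ _ _ S1 S2)).
  2: change (euler_sum p (x * p) + - (x * euler_sum p (x * p))
             = (1 - x) * euler_sum p (x * p)); ring.
  intros [|m]; unfold shifted, euler_term; simpl.
  - change (1 * 1 + - 0 = 1 * 1). ring.
  - change (euler_term p (x * p) (S m) + - (x * euler_term p (x * p) m)
            = euler_term p x (S m)); unfold euler_term; simpl.
    rewrite !Cpow_mult_l. pose proof (Cminus_1_pow_S_neq_0 p m Hp) as Hnz. simpl in Hnz.
    field. exact Hnz.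
Qed.

Lemma euler_sum_qpoch p x N : (Cmod p < 1)%R ->
  euler_sum p x = qpoch x p N * euler_sum p (x * p ^ N).
Proof.
  intros Hp. induction N as [|N IH].
  - simpl. rewrite Cmult_1_r. ring.
  - rewrite IH, (euler_sum_shift p (x * p ^ N) Hp), qpoch_S, Cpow_S.
    replace (x * p ^ N * p) with (x * (p * p ^ N)) by ring. ring.
Qed.

Lemma Cmod_euler_sum_sub_1_le p : (Cmod p < 1)%R -> exists K, (0 <= K)%R /\
  forall y, (Cmod y <= 1)%R -> (Cmod (euler_sum p y - 1) <= Cmod y * K)%R.
Proof.
  intros Hp.
  set (b := fun k => Cmod (euler_coef p (S k))).
  assert (Hb : ex_series b).
  { pose proof (ex_series_Cmod_euler_coef p 1 Hp ltac:(lra)) as H. apply ex_series_incr_1 in H.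
    refine (ex_series_ext _ _ _ H). intros n. unfold b. rewrite pow1. apply Rmult_1_r. }
  destruct Hb as [K HK]. exists (Rabs K). split; [apply Rabs_pos |].
  intros y Hy.
  assert (S1 : is_series (fun k => euler_term p y (S k)) (euler_sum p y - 1)).
  { apply is_series_incr_1.
    refine (is_series_C_ext _ _ _ _ (fun n => eq_refl) _ (is_series_euler_sum p y Hp)).
    change (euler_sum p y = euler_sum p y - 1 + 1 * 1). ring. }
  assert (S2 : is_series (fun k => Cmod y * b k)%R (Cmod y * K)%R)
    by exact (is_series_scal_l (V := R_NormedModule) (Cmod y) _ _ HK).
  eapply Rle_trans; [refine (is_series_Cmod_le _ _ _ _ _ S1 S2) |].
  - intros k. unfold euler_term, b. rewrite Cmod_mult, Cmod_pow. simpl pow.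
    pose proof (Cmod_ge_0 y). pose proof (Cmod_ge_0 (euler_coef p (S k))).
    assert (Cmod y ^ k <= 1)%R by (rewrite <- Cmod_pow; apply Cmod_pow_le_1, Hy).
    assert (0 <= Cmod (euler_coef p (S k)) * Cmod y)%R by (apply Rmult_le_pos; assumption).
    nra.
  - apply Rmult_le_compat_l; [apply Cmod_ge_0 | apply Rle_abs].
Qed.

Lemma filterlim_euler_sum_1 p x : (Cmod p < 1)%R ->
  filterlim (fun n => euler_sum p (x * p ^ n)) eventually (locally (RtoC 1)).
Proof.
  intros Hp. destruct (Cmod_euler_sum_sub_1_le p Hp) as [K [HK0 HK]].
  apply filterlim_C_eps. intros eps He.
  set (d := (Rmin 1 (eps / 2) / ((Cmod x + 1) * (K + 1)))%R).
  pose proof (Cmod_ge_0 x).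
  assert (Hm : (0 < Rmin 1 (eps / 2) /\ Rmin 1 (eps / 2) <= 1 /\ Rmin 1 (eps / 2) <= eps / 2)%R)
    by (split; [apply Rmin_glb_lt; lra | split; [apply Rmin_l | apply Rmin_r]]).
  assert (Hd : (0 < d)%R) by (apply Rdiv_lt_0_compat; [lra | nra]).
  destruct (pow_lt_1_zero (Cmod p) ltac:(rewrite Rabs_right; [lra | apply Rle_ge, Cmod_ge_0]) d Hd)
    as [N HN].
  exists N. intros n Hn.
  specialize (HN n Hn). rewrite Rabs_right in HN by (apply Rle_ge, pow_le, Cmod_ge_0).
  assert (Hy : (Cmod (x * p ^ n) * (K + 1) <= Rmin 1 (eps / 2))%R).
  { rewrite Cmod_mult, Cmod_pow.
    apply Rle_trans with (Cmod x * d * (K + 1))%R.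
    { apply Rmult_le_compat_r; [lra |]. apply Rmult_le_compat_l; lra. }
    unfold d.
    replace (Cmod x * (Rmin 1 (eps / 2) / ((Cmod x + 1) * (K + 1))) * (K + 1))%R
      with (Rmin 1 (eps / 2) * (Cmod x / (Cmod x + 1)))%R by (field; lra).
    assert (Cmod x / (Cmod x + 1) <= 1)%R.
    { apply Rmult_le_reg_r with (Cmod x + 1)%R; [lra |]. field_simplify; lra. }
    nra. }
  pose proof (Cmod_ge_0 (x * p ^ n)).
  assert (Hy1 : (Cmod (x * p ^ n) <= 1)%R) by nra.
  pose proof (HK _ Hy1). nra.
Qed.

Lemma filterlim_mult_lim_1 (u z : nat -> C) E : (forall n, u n * z n = E) ->
  filterlim z eventually (locally (RtoC 1)) -> filterlim u eventually (locally E).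
Proof.
  intros Hprod Hz. apply filterlim_C_eps. intros eps He.
  pose proof (Cmod_ge_0 E).
  destruct (proj1 (filterlim_C_eps _ _) Hz (Rmin (1 / 4) (eps / (2 * (Cmod E + 1))))
    ltac:(apply Rmin_glb_lt; [lra | apply Rdiv_lt_0_compat; lra])) as [N HN].
  exists N. intros n Hn. specialize (HN n Hn).
  pose proof (Rmin_l (1 / 4) (eps / (2 * (Cmod E + 1)))).
  pose proof (Rmin_r (1 / 4) (eps / (2 * (Cmod E + 1)))).
  assert (Hz1 : (3 / 4 <= Cmod (z n))%R).
  { pose proof (Cmod_triangle (z n - 1) (- z n)). rewrite Cmod_opp in H2.
    replace (z n - 1 + - z n) with (- (1)) in H2 by ring. rewrite Cmod_opp, Cmod_1 in H2. lra. }
  assert (Hu : (Cmod (u n) * Cmod (z n) = Cmod E)%R) by (rewrite <- Cmod_mult, Hprod; reflexivity).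
  replace (u n - E) with (- (u n * (z n - 1))) by (rewrite <- (Hprod n); ring).
  rewrite Cmod_opp, Cmod_mult.
  assert (HE : (eps / (2 * (Cmod E + 1)) * (Cmod E + 1) = eps / 2)%R) by (field; lra).
  pose proof (Cmod_ge_0 (u n)). pose proof (Cmod_ge_0 (z n - 1)). nra.
Qed.

Lemma qpoch_inf_euler_sum p x : (Cmod p < 1)%R -> qpoch_inf_is x p (euler_sum p x).
Proof.
  intros Hp. apply (filterlim_mult_lim_1 _ (fun n => euler_sum p (x * p ^ n))).
  - intros n. symmetry. apply euler_sum_qpoch, Hp.
  - apply filterlim_euler_sum_1, Hp.
Qed.

Lemma qpoch_self_neq_0 Q n : (Cmod Q < 1)%R -> qpoch Q Q n <> 0.
Proof.
  intros HQ. induction n as [|n IH]; simpl.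
  - apply C1_nz.
  - rewrite pow_n_Cpow, <- Cpow_S. apply Cmult_neq_0; [exact IH | apply Cminus_1_pow_S_neq_0, HQ].
Qed.

(* [qtri Q m] is Q^(m(m-1)/2). *)
Fixpoint qtri (Q : C) (m : nat) : C :=
  match m with
  | O => 1
  | S j => qtri Q j * Q ^ j
  end.

Lemma qtri_sqr q m : qtri (q * q) m = q ^ (m * (m - 1)).
Proof.
  induction m as [|m IH]; [reflexivity |]. simpl qtri.
  rewrite IH, Cpow_sqr, <- Cpow_add_r. f_equal. destruct m; simpl; lia.
Qed.

Lemma euler_coef_qpoch p m : (Cmod p < 1)%R -> euler_coef p m * qpoch p p m = (-1) ^ m * qtri p m.
Proof.
  intros Hp. induction m as [|m IH]; [simpl; ring |].
  rewrite qpoch_S, euler_coef_S. simpl qtri.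
  transitivity (euler_coef p m * qpoch p p m * - p ^ m).
  - pose proof (Cminus_1_pow_S_neq_0 p m Hp). simpl in *. field. assumption.
  - rewrite IH. simpl. ring.
Qed.

Fixpoint qbinom (Q : C) (n k : nat) : C :=
  match n, k with
  | O, O => 1
  | O, S _ => 0
  | S _, O => 1
  | S n', S k' => qbinom Q n' (S k') + Q ^ (n' - k') * qbinom Q n' k'
  end.

Lemma qbinom_gt Q n k : (n < k)%nat -> qbinom Q n k = 0.
Proof.
  revert k. induction n as [|n IH]; intros k H; destruct k; try lia; [reflexivity |].
  simpl. rewrite !IH by lia. ring.
Qed.

Lemma qbinom_n0 Q n : qbinom Q n 0 = 1.
Proof. destruct n; reflexivity. Qed.

Lemma qpoch_qbinom_sum Q a n :
  qpoch a Q n = sum_n (fun k => qbinom Q n k * (- a) ^ k * qtri Q k) n.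
Proof.
  induction n as [|n IH]; [rewrite sum_O; simpl; ring |].
  set (F := fun k => qbinom Q n k * (- a) ^ k * qtri Q k) in *.
  rewrite qpoch_S, IH, sum_n_Sl.
  assert (Hpascal : forall k, (k <= n)%nat ->
    qbinom Q (S n) (S k) * (- a) ^ S k * qtri Q (S k) = F (S k) + (- a * Q ^ n) * F k).
  { intros k Hk. unfold F. simpl qbinom. simpl qtri. rewrite Cpow_S.
    replace (Q ^ n) with (Q ^ (n - k) * Q ^ k) by (rewrite <- Cpow_add_r; f_equal; lia).
    ring. }
  rewrite (sum_n_C_ext_loc _ _ n Hpascal).
  rewrite sum_n_Cplus, sum_n_Cmult_l.
  assert (HF : sum_n (fun k => F (S k)) n = sum_n F n - F O :> C).
  { assert (E : sum_n F (S n) = sum_n F n :> C).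
    { rewrite sum_Sn. unfold F at 2. rewrite qbinom_gt by lia.
      change (sum_n F n + 0 * (- a) ^ S n * qtri Q (S n) = sum_n F n). ring. }
    rewrite <- E, sum_n_Sl. symmetry. ring. }
  rewrite HF. unfold F at 3. rewrite !qbinom_n0. simpl. ring.
Qed.

Lemma qbinom_qpoch Q n k : (k <= n)%nat ->
  qbinom Q n k * qpoch Q Q k * qpoch Q Q (n - k) = qpoch Q Q n.
Proof.
  revert k. induction n as [|n IH]; intros k Hk.
  - destruct k; [simpl; ring | lia].
  - destruct k as [|k].
    + rewrite qbinom_n0, Nat.sub_0_r. simpl. ring.
    + simpl qbinom. replace (S n - S k)%nat with (n - k)%nat by lia.
      destruct (Nat.eq_dec k n) as [-> | Hne].
      * rewrite qbinom_gt by lia. rewrite Nat.sub_diag.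
        pose proof (IH n (Nat.le_refl n)) as H. rewrite Nat.sub_diag in H.
        rewrite qpoch_S. rewrite <- H at 2. simpl. ring.
      * destruct (n - k)%nat as [|j] eqn:Hj; [lia |].
        pose proof (IH (S k) ltac:(lia)) as H1. replace (n - S k)%nat with j in H1 by lia.
        pose proof (IH k ltac:(lia)) as H2. rewrite Hj in H2.
        transitivity (qbinom Q n (S k) * qpoch Q Q (S k) * qpoch Q Q j * (1 - Q * Q ^ j)
          + Q ^ S j * (qbinom Q n k * qpoch Q Q k * qpoch Q Q (S j)) * (1 - Q * Q ^ k)).
        { rewrite !qpoch_S. ring. }
        rewrite H1, H2, (qpoch_S Q Q n).
        replace (Q * Q ^ n) with (Q ^ S j * (Q * Q ^ k))
          by (rewrite <- !Cpow_S, <- Cpow_add_r; f_equal; lia).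
        rewrite Cpow_S. ring.
Qed.

Definition G_coef (A q : C) (k : nat) : C :=
  A ^ k * (-1) ^ k * q ^ (2 * k * k + k) / qpoch (q * q) (q * q) k.

Definition G_inner (q : C) (k : nat) : nat -> C := euler_term (q * q) (- q * (q * q) ^ S k).

Lemma G_term_convolution A q n : (Cmod q < 1)%R ->
  G_term A q n = sum_n (fun k => G_coef A q k * G_inner q k (n - k)) n.
Proof.
  intros Hq. pose proof (Cmod_sqr_lt_1 q Hq) as HQ. set (Q := q * q) in *.
  unfold G_term. fold Q. rewrite qpoch_qbinom_sum, !pow_n_Cpow.
  unfold Cdiv. rewrite Cmult_comm, Cmult_assoc, <- sum_n_Cmult_l.
  apply sum_n_C_ext_loc. intros k Hk.
  destruct (Nat.le_exists_sub k n Hk) as [m [-> _]].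
  replace (m + k - k)%nat with m by lia.
  pose proof (qpoch_self_neq_0 Q k HQ). pose proof (qpoch_self_neq_0 Q m HQ).
  pose proof (qpoch_self_neq_0 Q (m + k) HQ).
  assert (Hqbinom : qbinom Q (m + k) k = qpoch Q Q (m + k) / (qpoch Q Q k * qpoch Q Q m)).
  { rewrite <- (qbinom_qpoch Q (m + k) k) by lia. replace (m + k - k)%nat with m by lia.
    field. auto. }
  assert (Hcoef : euler_coef Q m = (-1) ^ m * qtri Q m / qpoch Q Q m).
  { rewrite <- (euler_coef_qpoch Q m HQ). field. auto. }
  unfold G_coef, G_inner, euler_term. fold Q.
  rewrite Hqbinom, Hcoef. unfold Q. rewrite !qtri_sqr. fold Q.
  rewrite (Cpow_opp A), Cpow_mult_l, (Cpow_opp q), <- Cpow_mult_r.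
  unfold Q. rewrite (Cpow_sqr q (S k * m)). fold Q.
  transitivity ((-1) ^ k * A ^ k / (qpoch Q Q k * qpoch Q Q m)
    * (q ^ ((m + k) * (m + k) + 2 * (m + k)) * q ^ (k * (k - 1)))); [field; auto |].
  replace (q ^ ((m + k) * (m + k) + 2 * (m + k)) * q ^ (k * (k - 1)))
    with (q ^ (2 * k * k + k) * q ^ (m * (m - 1)) * q ^ m * q ^ (2 * (S k * m)))
    by (rewrite <- !Cpow_add_r; f_equal; destruct k, m; simpl; nia).
  match goal with |- ?L = _ => transitivity ((-1) ^ m * (-1) ^ m * L) end.
  - rewrite Cpow_m1_mul_self. ring.
  - field. auto.
Qed.

Lemma sum_n_G_term A q N : (Cmod q < 1)%R ->
  sum_n (G_term A q) N = sum_n (fun k => G_coef A q k * sum_n (G_inner q k) (N - k)) N :> C.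
Proof.
  intros Hq. induction N as [|N IH].
  - rewrite !sum_O, (G_term_convolution A q 0 Hq), !sum_O. reflexivity.
  - rewrite sum_n_C_Sn, IH, (G_term_convolution A q (S N) Hq), !sum_n_C_Sn.
    rewrite Nat.sub_diag, sum_O.
    rewrite (sum_n_C_ext_loc (fun k => G_coef A q k * sum_n (G_inner q k) (S N - k))
      (fun k => G_coef A q k * sum_n (G_inner q k) (N - k) + G_coef A q k * G_inner q k (S N - k))).
    + rewrite sum_n_Cplus. ring.
    + intros k Hk. replace (S N - k)%nat with (S (N - k)) by lia. rewrite sum_n_C_Sn. ring.
Qed.

Lemma G_coef_S A q k : (Cmod q < 1)%R ->
  G_coef A q (S k) = G_coef A q k * (- A * q ^ (4 * k + 3) / (1 - (q * q) ^ S k)).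
Proof.
  intros Hq. pose proof (Cmod_sqr_lt_1 q Hq) as HQ.
  pose proof (qpoch_self_neq_0 (q * q) k HQ). pose proof (Cminus_1_pow_S_neq_0 (q * q) k HQ).
  unfold G_coef. rewrite (qpoch_S (q * q) (q * q) k), <- Cpow_S.
  replace (q ^ (2 * S k * S k + S k)) with (q ^ (2 * k * k + k) * q ^ (4 * k + 3))
    by (rewrite <- Cpow_add_r; f_equal; lia).
  simpl (A ^ S k). simpl ((-1) ^ S k). field. auto.
Qed.

Lemma ex_series_Cmod_G_coef A q : (Cmod q < 1)%R -> ex_series (fun k => Cmod (G_coef A q k)).
Proof.
  intros Hq. pose proof (Cmod_ge_0 q) as Hq0.
  apply ex_series_ratio_pow with (K := (Cmod A / (1 - Cmod q))%R) (r := Cmod q).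
  - split; assumption.
  - intros; apply Cmod_ge_0.
  - intros k. rewrite (G_coef_S A q k Hq), Cmod_mult. apply Rmult_le_compat_l; [apply Cmod_ge_0 |].
    unfold Cdiv. rewrite !Cmod_mult, Cmod_inv by (apply Cminus_1_pow_S_neq_0, Cmod_sqr_lt_1, Hq).
    rewrite Cmod_opp, Cmod_pow.
    assert (Hpow : (Cmod q ^ (4 * k + 3) <= Cmod q ^ k)%R).
    { replace (4 * k + 3)%nat with (k + (3 * k + 3))%nat by lia. rewrite pow_add.
      pose proof (pow_le (Cmod q) k Hq0).
      assert (Cmod q ^ (3 * k + 3) <= 1)%R by (rewrite <- Cmod_pow; apply Cmod_pow_le_1; lra).
      nra. }
    assert (Hden : (1 - Cmod q <= Cmod (1 - (q * q) ^ S k))%R).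
    { pose proof (Cmod_1_minus_pow_S_ge (q * q) k ltac:(pose proof (Cmod_sqr_lt_1 q Hq); lra)).
      rewrite Cmod_mult in H. nra. }
    assert (/ Cmod (1 - (q * q) ^ S k) <= / (1 - Cmod q))%R by (apply Rinv_le_contravar; lra).
    pose proof (Cmod_ge_0 A). pose proof (pow_le (Cmod q) (4 * k + 3) Hq0).
    assert (0 <= / Cmod (1 - (q * q) ^ S k))%R by (apply Rlt_le, Rinv_0_lt_compat; lra).
    replace (Cmod A / (1 - Cmod q) * Cmod q ^ k)%R with (Cmod A * Cmod q ^ k * / (1 - Cmod q))%R
      by (unfold Rdiv; ring).
    apply Rmult_le_compat; [apply Rmult_le_pos; assumption | assumption | | assumption].
    apply Rmult_le_compat_l; assumption.
Qed.

Lemma euler_coef_odd q k : (Cmod q < 1)%R ->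
  euler_coef (- q) (2 * k + 1) * qpoch (- q) (q * q) (S k) * qpoch (q * q) (q * q) k
  = - ((-1) ^ k * q ^ (2 * k * k + k)).
Proof.
  intros Hq. assert (Hq' : (Cmod (- q) < 1)%R) by (rewrite Cmod_opp; exact Hq).
  induction k as [|k IH].
  - pose proof (Cminus_1_pow_S_neq_0 (- q) 0 Hq') as H. rewrite qpoch_S. simpl in *. field.
    rewrite Cmult_1_r in H. exact H.
  - replace (2 * S k + 1)%nat with (S (S (2 * k + 1))) by lia.
    pose proof (Cminus_1_pow_S_neq_0 (- q) (S (2 * k + 1)) Hq') as H1.
    pose proof (Cminus_1_pow_S_neq_0 (- q) (2 * k + 1) Hq') as H2.
    rewrite !euler_coef_S, (qpoch_S (- q) (q * q) (S k)), (qpoch_S (q * q) (q * q) k).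
    set (X := q ^ (2 * k + 1)).
    assert (E1 : (- q) ^ (2 * k + 1) = - X) by (rewrite Cpow_opp, Cpow_m1_double_S; unfold X; ring).
    assert (E2 : (- q) ^ S (2 * k + 1) = q * X) by (rewrite Cpow_S, E1; ring).
    assert (E3 : (- q) ^ S (S (2 * k + 1)) = - (q * q * X)) by (rewrite Cpow_S, E2; ring).
    assert (E4 : (q * q) ^ S k = q * X).
    { rewrite Cpow_sqr. unfold X. rewrite <- Cpow_S. f_equal. lia. }
    assert (E5 : q ^ (2 * S k * S k + S k) = q ^ (2 * k * k + k) * X * X * q).
    { unfold X. rewrite <- !Cpow_add_r.
      transitivity (q ^ (2 * k * k + k + (2 * k + 1) + (2 * k + 1) + 1)); [f_equal; lia |].
      rewrite Cpow_add_r, Cpow_1_r. reflexivity. }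
    rewrite E3 in H1. rewrite E2 in H2.
    rewrite E1, E2, E3, E4, <- Cpow_S, E4, E5.
    transitivity (euler_coef (- q) (2 * k + 1) * qpoch (- q) (q * q) (S k)
      * qpoch (q * q) (q * q) k * - (q * X * X)); [field; auto |].
    rewrite IH. simpl. ring.
Qed.

Lemma G_inner_partial_sums_bounded q : (Cmod q < 1)%R ->
  exists B, forall k j, (Cmod (sum_n (G_inner q k) j) <= B)%R.
Proof.
  intros Hq. pose proof (Cmod_sqr_lt_1 q Hq) as HQ.
  destruct (ex_series_Cmod_euler_coef (q * q) 1 HQ ltac:(lra)) as [B HB].
  exists B. intros k j.
  eapply Rle_trans; [apply Cmod_sum_n_le |].
  eapply Rle_trans;
    [| apply (sum_n_le_is_series (fun m => Cmod (euler_coef (q * q) m) * 1 ^ m)%R B j);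
       [| exact HB]].
  - apply sum_n_m_le. intros m. unfold G_inner, euler_term.
    rewrite Cmod_mult, !Cmod_pow. apply Rmult_le_compat_l; [apply Cmod_ge_0 |].
    apply pow_incr. split; [apply Cmod_ge_0 |].
    rewrite Cmod_mult, Cmod_opp.
    pose proof (Cmod_pow_le_1 (q * q) (S k) ltac:(lra)).
    pose proof (Cmod_ge_0 q). pose proof (Cmod_ge_0 ((q * q) ^ S k)). nra.
  - intros m. apply Rmult_le_pos; [apply Cmod_ge_0 | rewrite pow1; lra].
Qed.

(* Summing G row by row: the n-th term of G is the n-th antidiagonal of the double series
   sum_k G_coef k * G_inner k m, and Tannery's theorem justifies the interchange. *)
Lemma is_series_G_term_of_rows A q L : (Cmod q < 1)%R ->
  is_series (fun k => G_coef A q k * euler_sum (q * q) (- q * (q * q) ^ S k)) L ->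
  is_series (G_term A q) L.
Proof.
  intros Hq HL. pose proof (Cmod_sqr_lt_1 q Hq) as HQ.
  destruct (G_inner_partial_sums_bounded q Hq) as [B HB].
  unfold is_series.
  apply (filterlim_ext (fun N => sum_n (fun k => G_coef A q k * sum_n (G_inner q k) (N - k)) N)).
  { intros N. symmetry. apply sum_n_G_term, Hq. }
  refine (tannery _ _ (fun k => Cmod (G_coef A q k) * B)%R _ _ _ _ HL).
  - intros k.
    refine (filterlim_comp _ _ _ (fun N => sum_n (G_inner q k) (N - k))
      (fun z => scal (G_coef A q k) z) _ _ _ _ (filterlim_scal_r _ _)).
    refine (filterlim_comp _ _ _ (fun N => (N - k)%nat) (sum_n (G_inner q k)) _ eventually _ _
      (is_series_euler_sum (q * q) _ HQ)).
    intros P [N HN]. exists (N + k)%nat. intros n Hn. apply HN. lia.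
  - intros N k. rewrite Cmod_mult. apply Rmult_le_compat_l; [apply Cmod_ge_0 | apply HB].
  - apply ex_series_scal_r, ex_series_Cmod_G_coef, Hq.
Qed.

(* The k-th row sum is the (2k+1)-st term of the odd part of (-s;-q)_oo - (s;-q)_oo,
   since (-q;q^2)_(k+1) (q^2;q^2)_k = (-q;-q)_(2k+1). *)
Lemma is_series_G_rows A q s : s * s = A -> s <> 0 -> (Cmod q < 1)%R ->
  is_series (fun k => G_coef A q k * euler_sum (q * q) (- q * (q * q) ^ S k))
    (/ (2 * s) * euler_sum (q * q) (- q) * (euler_sum (- q) (- s) - euler_sum (- q) s)).
Proof.
  intros Hs Hs0 Hq.
  pose proof (Cmod_sqr_lt_1 q Hq) as HQ.
  assert (Hq' : (Cmod (- q) < 1)%R) by (rewrite Cmod_opp; exact Hq).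
  set (h := fun n => euler_term (- q) (- s) n - euler_term (- q) s n).
  assert (Hh : is_series h (euler_sum (- q) (- s) - euler_sum (- q) s))
    by exact (is_series_minus _ _ _ _ (is_series_euler_sum _ _ Hq') (is_series_euler_sum _ _ Hq')).
  assert (Heven : forall k, h (2 * k)%nat = 0).
  { intros k. unfold h, euler_term. rewrite Cpow_opp, Cpow_m1_double. ring. }
  refine (is_series_C_ext _ _ _ _ _ eq_refl
    (is_series_scal_l (V := C_NormedModule) (/ (2 * s) * euler_sum (q * q) (- q)) _ _
      (is_series_odd h _ Hh Heven))).
  intros k. change (/ (2 * s) * euler_sum (q * q) (- q) * h (2 * k + 1)%nat
    = G_coef A q k * euler_sum (q * q) (- q * (q * q) ^ S k)).
  pose proof (qpoch_self_neq_0 (q * q) k HQ).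
  rewrite (euler_sum_qpoch (q * q) (- q) (S k) HQ).
  unfold h, euler_term. rewrite Cpow_opp, Cpow_m1_double_S.
  replace (s ^ (2 * k + 1)) with (A ^ k * s) by (rewrite Cpow_add_r, <- Cpow_sqr, Hs; simpl; ring).
  unfold G_coef.
  set (W := euler_sum (q * q) (- q * (q * q) ^ S k)).
  transitivity (- (W * A ^ k * (euler_coef (- q) (2 * k + 1) * qpoch (- q) (q * q) (S k)
    * qpoch (q * q) (q * q) k)) / qpoch (q * q) (q * q) k); [field; auto |].
  rewrite euler_coef_odd by exact Hq. field. auto.
Qed.

Theorem lemma3p2 (A q s : Complex.C) :
  A <> 0 -> s * s = A -> (Cmod q < 1)%R ->
  exists P Pm Pp : Complex.C,
    qpoch_inf_is (- q) (q * q) P /\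
    qpoch_inf_is (- s) (- q) Pm /\
    qpoch_inf_is s (- q) Pp /\
    is_series (G_term A q) (/ (2 * s) * P * (Pm - Pp)).
Proof.
  intros HA Hs Hq.
  assert (Hs0 : s <> 0) by (intros ->; apply HA; rewrite <- Hs; ring).
  assert (Hq' : (Cmod (- q) < 1)%R) by (rewrite Cmod_opp; exact Hq).
  exists (euler_sum (q * q) (- q)), (euler_sum (- q) (- s)), (euler_sum (- q) s).
  split; [apply qpoch_inf_euler_sum, Cmod_sqr_lt_1, Hq |].
  split; [apply qpoch_inf_euler_sum, Hq' |].
  split; [apply qpoch_inf_euler_sum, Hq' |].
  apply is_series_G_term_of_rows; [exact Hq |].
  apply is_series_G_rows; assumption.
Qed.
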